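(* Let $n_1,n_2,n_3$ be pairwise coprime positive integers forming a minimal system of generators of $\mathcal S=\langle n_1,n_2,n_3\rangle$, and let $\{i,j,k\}=\{1,2,3\}$. Let $\lambda_{ij}=[-n_in_j^{-1}]_{n_k}$, $\lambda_{ik}=[-n_in_k^{-1}]_{n_j}$ (so that $n_i=n_jn_k-\lambda_{ij}n_j-\lambda_{ik}n_k$), and put $N_i=n_jn_k-\lambda_{ij}n_j-n_k$. Let $\mathcal T_k=\{x\in\mathbb N: xn_k\in\langle n_j,N_i\rangle\}$. Then $$\mathcal S_k=\{\,x-(\lambda_{ik}-1)[-x]_{n_j}\ :\ x\in\mathcal T_k\,\}.$$
   Context: $\mathbb N$ denotes the nonnegative integers. For integers $a_1,\dots,a_r$, $\langle a_1,\dots,a_r\rangle=\{\sum t_la_l: t_l\in\mathbb N\}$. Minimal system of generators means that no $n_l$ belongs to the monoid generated by the other two. For an integer $m$ and $n\ge 1$, $[m]_n\in\{0,\dots,n-1\}$ denotes the remainder of $m$ upon division by $n$; for $a$ coprime to $n$, the symbol $a^{-1}$ inside $[\cdot]_n$ denotes a multiplicative inverse of $a$ modulo $n$. For $\{i,j,k\}=\{1,2,3\}$, $\mathcal S_k=\{M\in\mathbb N: Mn_k\in\langle n_i,n_j\rangle\}$ and $c_k=\min(\mathcal S_k\setminus\{0\})$ (the minimal relation for $n_k$). *)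

From mathcomp Require Import all_boot all_order all_algebra.
Set Implicit Arguments. Unset Strict Implicit. Unset Printing Implicit Defensive.
Import GRing.Theory Num.Theory.

(* m \in <a, b> : m is a nonnegative integer combination of a and b
   (stated over int so that possibly negative generators make sense). *)
Definition inmon2 (a b m : int) : Prop :=
  exists s t : nat, m = (s%:Z * a + t%:Z * b)%R.

(* A multiplicative inverse of a modulo n (for a > 0, coprime a n),
   given by the Bezout coefficient: (egcdn a n).1 * a = 1 mod n. *)
Definition invmod (a n : nat) : nat := (egcdn a n).1 %% n.

Definition negmod (m n : nat) : nat := (n - m %% n) %% n.

Definition lam (a b c : nat) : nat := negmod (a * invmod b c) c.

Definition inS (ni nj nk M : nat) : Prop :=
  inmon2 ni%:Z nj%:Z (M * nk)%:Z.

Definition bigN (ni nj nk : nat) : int :=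
  (nj%:Z * nk%:Z - (lam ni nj nk)%:Z * nj%:Z - nk%:Z)%R.

Definition inT (ni nj nk x : nat) : Prop :=
  inmon2 nj%:Z (bigN ni nj nk) (x * nk)%:Z.

Definition phi (ni nj nk x : nat) : int :=
  (x%:Z - ((lam ni nk nj)%:Z - 1) * (negmod x nj)%:Z)%R.

From mathcomp Require Import all_boot all_order all_algebra.
From mathcomp Require Import zify.

Set Implicit Arguments.
Unset Strict Implicit.
Unset Printing Implicit Defensive.

(* Write a, b, c for n_i, n_j, n_k, and u for lambda_ik - 1.  Minimality of a
   gives a + lambda_ij b + lambda_ik c = b c, hence N_i = a + u c.  For any
   s, t, the map M |-> M + s u sends a relation M c = s a + t b to the relation
   (M + s u) c = s N_i + t b, and back.  Reducing s modulo b (absorbing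
   multiples of b into t) makes s = [-(M + s u)]_b, because b divides
   a + (u + 1) c; so the two sets correspond through x |-> x - u [-x]_b. *)

Lemma inmon2_natP a b m :
  inmon2 a%:Z b%:Z m%:Z <-> exists s t, m = s * a + t * b.
Proof.
split=> -[s [t eq_m]]; exists s, t; last by rewrite eq_m PoszD !PoszM.
by move: eq_m; rewrite -!PoszM -PoszD => -[].
Qed.

Lemma negmodP n m : 0 < n -> n %| negmod m n + m.
Proof.
move=> n0; rewrite /dvdn /negmod modnDml -modnDmr.
by rewrite (subnK (ltnW (ltn_pmod m n0))) modnn.
Qed.

Lemma negmod_uniq n x s : 0 < n -> n %| x + s -> s %% n = negmod x n.
Proof.
move=> n0 dvd_xs.
have : s + x = negmod x n + x %[mod n].
  by move: dvd_xs (negmodP x n0); rewrite /dvdn addnC => /eqP -> /eqP ->.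
by move/eqP; rewrite eqn_modDr => /eqP ->; rewrite /negmod modn_mod.
Qed.

Lemma invmodP b c : 0 < b -> coprime b c -> invmod b c * b = 1 %[mod c].
Proof.
move=> b0 cop_bc; rewrite /invmod modnMml.
case: (egcdnP c b0) => km kn -> _ /=.
by rewrite (eqP cop_bc) modnMDl.
Qed.

Lemma lamP a b c :
  0 < c -> 0 < b -> coprime b c -> c %| a + lam a b c * b.
Proof.
move=> c0 b0 cop_bc; rewrite /lam /dvdn.
set n := negmod _ c.
have <- : (n + a * invmod b c) * b = a + n * b %[mod c].
  rewrite mulnDl -mulnA addnC -modnDml -modnMmr invmodP //.
  by rewrite modnMmr muln1 modnDml.
by rewrite -/(dvdn c _) dvdn_mulr // negmodP.
Qed.

Lemma lam_lt a b c : 0 < c -> lam a b c < c.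
Proof. by move=> c0; rewrite /lam /negmod ltn_pmod. Qed.

Lemma lam_gt0 a b c :
  0 < b -> 0 < c -> coprime a b -> coprime c b ->
  ~ inmon2 b%:Z c%:Z a%:Z -> 0 < lam a c b.
Proof.
move=> b0 c0 cop_ab cop_cb a_notin; rewrite lt0n; apply/negP => /eqP l0.
have := lamP a b0 c0 cop_cb; rewrite l0 mul0n addn0 => dvd_ba.
have b1 : b = 1 by apply/eqP; rewrite -dvdn1 -(eqP cop_ab) dvdn_gcd dvd_ba dvdnn.
by apply: a_notin; apply/inmon2_natP; exists a, 0; rewrite b1; lia.
Qed.

(* The multiple of b c cannot be 0 since a > 0, and a multiple 2 + m would
   put a = (m c + (c - l)) b + (b - u) c in <b, c>. *)
Lemma lam_sum_eq a b c l u :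
  0 < a -> coprime b c -> l < c -> u < b ->
  c %| a + l * b -> b %| a + u * c -> ~ inmon2 b%:Z c%:Z a%:Z ->
  a + l * b + u * c = b * c.
Proof.
move=> a0 cop_bc lc ub dvd_c dvd_b a_notin.
have : b * c %| a + l * b + u * c.
  rewrite Gauss_dvd //; apply/andP; split.
    by rewrite addnAC dvdn_addl // dvdn_mull.
  by rewrite dvdn_addl // dvdn_mull.
case/dvdnP=> [[|[|m]]] sum_eq; [lia | by rewrite sum_eq mul1n | exfalso].
apply: a_notin; apply/inmon2_natP; exists (m * c + (c - l)), (b - u).
by nia.
Qed.

Lemma bigN_eq a b c :
  0 < a -> 0 < b -> 0 < c -> coprime a b -> coprime b c ->
  ~ inmon2 b%:Z c%:Z a%:Z ->
  bigN a b c = Posz (a + (lam a c b).-1 * c).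
Proof.
move=> a0 b0 c0 cop_ab cop_bc a_notin.
have cop_cb : coprime c b by rewrite coprime_sym.
have u0 := lam_gt0 b0 c0 cop_ab cop_cb a_notin.
have := lam_sum_eq a0 cop_bc (lam_lt a b c0) (lam_lt a c b0)
  (lamP a c0 b0 cop_bc) (lamP a b0 c0 cop_cb) a_notin.
rewrite /bigN -(prednK u0); move: (lam a b c) (lam a c b).-1 => l u sum_eq.
have : Posz (a + l * b + u.+1 * c) = Posz (b * c) by rewrite sum_eq.
by rewrite !PoszD !PoszM; lia.
Qed.

Lemma mulnDl_divn a b s t :
  s * a + t * b = s %% b * a + (s %/ b * a + t) * b.
Proof. by rewrite [in LHS](divn_eq s b); lia. Qed.

Section Shift.

Variables a b c u : nat.
Hypotheses (b0 : 0 < b) (cop_bc : coprime b c) (dvd_b : b %| a + u.+1 * c).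

Lemma shift_negmod x s t :
  x * c = s * (a + u * c) + t * b -> negmod x b = s %% b.
Proof.
move=> eq_x; apply/esym/negmod_uniq => //.
rewrite -(Gauss_dvdl _ cop_bc).
have -> : (x + s) * c = s * (a + u.+1 * c) + t * b by lia.
by rewrite dvdn_add ?dvdn_mull.
Qed.

Lemma shift_up M s t : M * c = s * a + t * b ->
  exists2 t', (M + s %% b * u) * c = s %% b * (a + u * c) + t' * b
            & negmod (M + s %% b * u) b = s %% b.
Proof.
rewrite mulnDl_divn => eq_M.
have eq_x : (M + s %% b * u) * c = s %% b * (a + u * c) + (s %/ b * a + t) * b.
  by lia.
by exists (s %/ b * a + t) => //; rewrite (shift_negmod eq_x) modn_mod.
Qed.

Lemma shift_down x s t : 0 < c -> x * c = s * (a + u * c) + t * b ->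
  exists2 t', (x - negmod x b * u) * c = negmod x b * a + t' * b
            & negmod x b * u <= x.
Proof.
move=> c0 eq_x; rewrite (shift_negmod eq_x).
move: eq_x; rewrite mulnDl_divn mulnDr mulnA.
move: (s %% b) (s %/ b * (a + u * c) + t) => r t' eq_x.
have le_x : r * u <= x by rewrite -(leq_pmul2r c0) eq_x; lia.
by exists t' => //; rewrite mulnBl; lia.
Qed.

End Shift.

Theorem mainTheorem3 (ni nj nk : nat) :
  0 < ni -> 0 < nj -> 0 < nk ->
  coprime ni nj -> coprime ni nk -> coprime nj nk ->
  ~ inmon2 (Posz nj) (Posz nk) (Posz ni) ->
  ~ inmon2 (Posz ni) (Posz nk) (Posz nj) ->
  ~ inmon2 (Posz ni) (Posz nj) (Posz nk) ->
  (forall M : nat, inS ni nj nk M ->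
     exists x : nat, inT ni nj nk x /\ (Posz M) = phi ni nj nk x) /\
  (forall x : nat, inT ni nj nk x ->
     exists M : nat, inS ni nj nk M /\ (Posz M) = phi ni nj nk x).
Proof.
move=> a0 b0 c0 cop_ab _ cop_bc a_notin _ _.
have cop_cb : coprime nk nj by rewrite coprime_sym.
have u0 := lam_gt0 b0 c0 cop_ab cop_cb a_notin.
have dvd_b := lamP ni b0 c0 cop_cb; rewrite -(prednK u0) in dvd_b.
rewrite /inS /inT /phi (bigN_eq a0 b0 c0 cop_ab cop_bc a_notin).
rewrite -[in Posz (lam ni nk nj)](prednK u0).
set u := (lam ni nk nj).-1 in dvd_b *.
split.
- move=> M /inmon2_natP [s [t /(shift_up b0 cop_bc dvd_b) [t' eq_x neg_x]]].
  exists (M + s %% nj * u); split; last by rewrite neg_x; lia.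
  by apply/inmon2_natP; exists t', (s %% nj); rewrite eq_x addnC.
- move=> x /inmon2_natP [t [s eq_x]].
  rewrite addnC in eq_x.
  have [t' eq_M le_x] := shift_down b0 cop_bc dvd_b c0 eq_x.
  exists (x - negmod x nj * u); split; last by lia.
  by apply/inmon2_natP; exists (negmod x nj), t'.
Qed.
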